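(* Let $F$ be a nonempty face of $V_0$ and $\lambda\in\Xi$. Then $\lambda\in\mathcal U(F)$ (i.e. $F\subseteq F_\lambda$) if and only if $N_\lambda\ge\phi(F)$ in $\mathcal{SC}(\mathcal M)$.
   Context: Let $\mathcal M$ be a regular matroid on a finite ground set $E$, represented by a totally unimodular matrix $M$ with columns $c_e$; $\mathcal F=\ker M\subseteq\mathbb R^E$ with Euclidean inner product, $\Lambda=\ker M\cap\mathbb Z^E$, $V_0=\{x\in\mathcal F:\|x\|\le\|x-\mu\|\ \forall\mu\in\Lambda\}$. A circuit in $\Lambda$ is a flow with coordinates in $\{-1,0,1\}$ whose support is a circuit (minimal dependent set of columns) of $\mathcal M$; $\Xi$ is the set of these. For $\gamma\in\Xi$, $F_\gamma=\{x\in\mathcal F:2\langle x,\gamma\rangle=\|\gamma\|^2\}$. An oriented submatroid is $(S,\varepsilon)$, $S\subseteq E$, $\varepsilon:S\to\{\pm1\}$; it is strongly connected if for every $e\in S$ there is $w\in\mathbb Z_{\ge0}^S$ with $w_e\ge1$ and $\sum_{f\in S}w_f\varepsilon_fc_f=0$. $\mathcal{SC}(\mathcal M)$ is the set of these, ordered by $(S,\varepsilon)\le(S',\varepsilon')$ iff $S'\subseteq S$ and $\varepsilon'=\varepsilon|_{S'}$. For $\lambda\in\Lambda$, $N_\lambda=(\operatorname{supp}\lambda,\ e\mapsto\operatorname{sgn}\lambda_e)$. For a nonempty face $F$ of $V_0$, $\mathcal U(F)=\{\gamma\in\Xi:F\subseteq F_\gamma\}$ and $\phi(F)=(S,\varepsilon)$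 with $S=\bigcup_{\gamma\in\mathcal U(F)}\operatorname{supp}\gamma$ and $\varepsilon_e=\operatorname{sgn}\gamma_e$ for any $\gamma\in\mathcal U(F)$ with $e\in\operatorname{supp}\gamma$ (this is well defined and lies in $\mathcal{SC}(\mathcal M)$). *)

From HB Require Import structures.
From mathcomp Require Import all_boot all_order all_algebra.
From mathcomp Require Import reals.
From Stdlib Require Import ClassicalEpsilon.
Set Implicit Arguments. Unset Strict Implicit. Unset Printing Implicit Defensive.
Import Order.TTheory GRing.Theory Num.Theory.
Local Open Scope ring_scope.

(* Ground set E = 'I_m; M : 'M[int]_(r, m), columns c_e = col e M. *)

Definition totally_unimodular (r m : nat) (M : 'M[int]_(r, m)) : Prop :=
  forall (k : nat) (f : 'I_k -> 'I_r) (g : 'I_k -> 'I_m),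
    \det (mxsub f g M) \in [:: -1; 0; 1].

Definition dotR (R : realType) (m : nat) (x y : 'I_m -> R) : R :=
  \sum_(e < m) x e * y e.
Definition normR (R : realType) (m : nat) (x : 'I_m -> R) : R :=
  Num.sqrt (dotR x x).

Definition intv (R : realType) (m : nat) (v : 'I_m -> int) : 'I_m -> R :=
  fun e => (v e)%:~R.

Definition in_flow_space (R : realType) (r m : nat) (M : 'M[int]_(r, m))
  (x : 'I_m -> R) : Prop :=
  forall i : 'I_r, \sum_(e < m) (M i e)%:~R * x e = 0.

Definition in_lattice (r m : nat) (M : 'M[int]_(r, m)) (mu : 'I_m -> int) : Prop :=
  forall i : 'I_r, \sum_(e < m) M i e * mu e = 0.

Definition voronoi0 (R : realType) (r m : nat) (M : 'M[int]_(r, m))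
  (x : 'I_m -> R) : Prop :=
  in_flow_space M x /\
  forall mu : 'I_m -> int, in_lattice M mu ->
    normR x <= normR (fun e => x e - intv R mu e).

Definition dependent_cols (R : realType) (r m : nat) (M : 'M[int]_(r, m))
  (S : {set 'I_m}) : Prop :=
  exists x : 'I_m -> R, (exists e, x e != 0) /\
    (forall e, x e != 0 -> e \in S) /\ in_flow_space M x.

Definition is_circuit (R : realType) (r m : nat) (M : 'M[int]_(r, m))
  (S : {set 'I_m}) : Prop :=
  dependent_cols R M S /\ forall T : {set 'I_m}, T \proper S -> ~ dependent_cols R M T.

Definition supp (m : nat) (g : 'I_m -> int) : {set 'I_m} := [set e | g e != 0].

Definition is_circuit_flow (R : realType) (r m : nat) (M : 'M[int]_(r, m))
  (g : 'I_m -> int) : Prop :=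
  (forall e, g e \in [:: -1; 0; 1]) /\ in_lattice M g /\ is_circuit R M (supp g).

(* nonempty-or-not face of a set K in R^E: exposed by a supporting hyperplane
   (includes K itself with a = 0, b = 0) *)
Definition is_face (R : realType) (m : nat) (K F : ('I_m -> R) -> Prop) : Prop :=
  exists (a : 'I_m -> R) (b : R),
    (forall x, K x -> dotR a x <= b) /\
    (forall x, F x <-> (K x /\ dotR a x = b)).

Definition Fgamma (R : realType) (r m : nat) (M : 'M[int]_(r, m))
  (g : 'I_m -> int) (x : 'I_m -> R) : Prop :=
  in_flow_space M x /\ 2 * dotR x (intv R g) = normR (intv R g) ^+ 2.

Definition inU (R : realType) (r m : nat) (M : 'M[int]_(r, m))
  (F : ('I_m -> R) -> Prop) (g : 'I_m -> int) : Prop :=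
  is_circuit_flow R M g /\ forall x, F x -> Fgamma M g x.

(* oriented submatroids (S, eps), eps only meaningful on S *)
Definition osub (m : nat) : Type := (('I_m -> Prop) * ('I_m -> int))%type.

Definition sc_le (m : nat) (N1 N2 : osub m) : Prop :=
  (forall e, N2.1 e -> N1.1 e) /\ (forall e, N2.1 e -> N2.2 e = N1.2 e).

Definition N_of (m : nat) (l : 'I_m -> int) : osub m :=
  (fun e => l e != 0 : Prop, fun e => sgz (l e)).

Definition phi (R : realType) (r m : nat) (M : 'M[int]_(r, m))
  (F : ('I_m -> R) -> Prop) : osub m :=
  (fun e => exists g, inU M F g /\ g e != 0,
   fun e => sgz (epsilon (inhabits (fun _ : 'I_m => 0 : int))
                  (fun g => inU M F g /\ g e != 0) e)).

From HB Require Import structures.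
From mathcomp Require Import all_boot all_order all_algebra.
From mathcomp Require Import reals.
From mathcomp Require Import ring lra zify.
From Stdlib Require Import Classical ClassicalEpsilon.

(* For a {-1,0,1}-circuit g one has |g|^2 = |g|_1, so a flow x lies on F_g exactly when
   2 <x, g> = |g|_1, i.e. when g is tight at x.  Total unimodularity provides, through any
   coordinate of the support of a nonzero lattice flow l, a circuit conforming to l: shrink a
   conformal real flow to a support-minimal one, which by Cramer's rule is a multiple of a
   {-1,0,1}-vector.  Peeling off such circuits gives 2 <x, l> <= |l|_1 on V_0 for every lattice
   flow l, so at a point of V_0 tightness passes to sums of sign-compatible vectors and to the
   summands of a decomposition l + k with |l + k|_1 = |l|_1 + |k|_1.  Two circuits tight at a
   common point are sign-compatible, since otherwise their sum would break the bound; this gives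
   N_l >= phi(F) for l in U(F).  Conversely, if N_l >= phi(F), the sum mu of circuits of U(F)
   chosen through the coordinates of supp l is tight on F and l conforms to mu, so l is tight
   on F as a summand of mu = l + (mu - l). *)

Set Implicit Arguments. Unset Strict Implicit. Unset Printing Implicit Defensive.
Import Order.TTheory GRing.Theory Num.Theory.
Local Open Scope ring_scope.

Definition pm1_valued (R : numDomainType) (I : Type) (v : I -> R) : Prop :=
  forall i, v i \in [:: -1; 0; 1].

Lemma pm1_signr (R : numDomainType) (x : R) k :
  x \in [:: -1; 0; 1] -> (-1) ^+ k * x \in [:: -1; 0; 1].
Proof.
rewrite -signr_odd; case: (odd k); rewrite ?expr0 ?expr1 ?mul1r //.
by rewrite !inE => /or3P [] /eqP ->; rewrite ?mulN1r ?opprK ?oppr0 eqxx ?orbT.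
Qed.

Lemma pm1_intr (R : numDomainType) (z : int) :
  z \in [:: -1; 0; 1] -> (z%:~R : R) \in [:: -1; 0; 1].
Proof.
by rewrite !inE => /or3P [] /eqP ->; rewrite ?rmorphN ?rmorph1 ?rmorph0 eqxx ?orbT.
Qed.

Lemma pm1_intrP (R : numDomainType) (x : R) :
  x \in [:: -1; 0; 1] -> exists z : int, z \in [:: -1; 0; 1] /\ x = z%:~R.
Proof.
rewrite !inE => /or3P [] /eqP ->; [exists (-1) | exists 0 | exists 1];
  by rewrite ?rmorphN ?rmorph1 ?rmorph0.
Qed.

Definition conforms (R : numDomainType) m (b a : 'I_m -> R) : Prop :=
  forall e, b e != 0 -> 0 < b e * a e.

Definition sign_compatible m (a b : 'I_m -> int) : Prop :=
  forall e, 0 <= a e * b e.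

Lemma mulr_self_gt0 (R : realDomainType) (x : R) : x != 0 -> 0 < x * x.
Proof. by move=> x0; rewrite lt0r mulf_eq0 negb_or x0 -expr2 sqr_ge0. Qed.

Lemma conforms_trans (R : realDomainType) m (c b a : 'I_m -> R) :
  conforms c b -> conforms b a -> conforms c a.
Proof.
move=> cb ba e ce; have cbe := cb e ce.
have be : b e != 0 by apply: contraTneq cbe => ->; rewrite mulr0 ltxx.
have : 0 < (c e * a e) * (b e * b e) by rewrite mulrACA mulr_gt0 // mulrC ba.
by rewrite (pmulr_lgt0 _ (mulr_self_gt0 be)).
Qed.

Lemma sgz_eq_mul_ge0 (a b : int) : a != 0 -> b != 0 -> 0 <= a * b -> sgz a = sgz b.
Proof. by move=> a0 b0 ab; nia. Qed.

Lemma mul_gt0_sgz_eq (a b : int) : a != 0 -> sgz a = sgz b -> 0 < a * b.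
Proof. by move=> a0 ab; nia. Qed.

Lemma mul_ge0_sign_trans (a b c : int) : 0 < a * c -> 0 <= b * c -> 0 <= a * b.
Proof. by move=> ac bc; nia. Qed.

Lemma normz_conforms_pm1 (g l : int) : g \in [:: -1; 0; 1] -> (g != 0 -> 0 < g * l) ->
  `|l| = `|g| + `|l - g|.
Proof. by rewrite !inE => /or3P [] /eqP -> gl; lia. Qed.

Lemma normzD_opposite_pm1 (a b : int) : a \in [:: -1; 0; 1] -> b \in [:: -1; 0; 1] ->
  a * b < 0 -> `|a + b| + 2 <= `|a| + `|b|.
Proof. by rewrite !inE => /or3P [] /eqP -> /or3P [] /eqP -> ab; lia. Qed.

Lemma normz_sum_compatible (I : finType) (P : pred I) (a : I -> int) :
  (forall i j, P i -> P j -> 0 <= a i * a j) ->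
  `|\sum_(i | P i) a i| = \sum_(i | P i) `|a i|.
Proof.
move=> compat; have [i0 /andP [Pi0 ai0]|a0] := pickP (fun i => P i && (a i != 0)).
  have normE i : P i -> `|a i| = sgz (a i0) * a i.
    by move=> Pi; have := compat i i0 Pi Pi0; nia.
  have sumE : \sum_(i | P i) `|a i| = sgz (a i0) * \sum_(i | P i) a i.
    by rewrite mulr_sumr; apply: eq_bigr.
  have sum_ge0 : 0 <= sgz (a i0) * \sum_(i | P i) a i by rewrite -sumE sumr_ge0.
  by rewrite sumE -(ger0_norm sum_ge0) normrM normr_sgz ai0 mul1r.
rewrite !big1 ?normr0 // => i Pi; move: (a0 i); rewrite Pi /= => /negbFE /eqP ->//.
Qed.

Definition norm1 m (g : 'I_m -> int) : int := \sum_e `|g e|.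

Lemma norm1_split m (a b c : 'I_m -> int) :
  (forall e, `|a e| = `|b e| + `|c e|) -> norm1 a = norm1 b + norm1 c.
Proof. by move=> abc; rewrite /norm1 -big_split; apply: eq_bigr. Qed.

Lemma norm1_conforms_pm1 m (g lam : 'I_m -> int) : pm1_valued g -> conforms g lam ->
  norm1 lam = norm1 g + norm1 (fun e => lam e - g e).
Proof. by move=> gpm glam; apply: norm1_split => e; apply: normz_conforms_pm1 (glam e). Qed.

(** * Totally unimodular systems *)

Section RegularMatroid.
Variables (R : realType) (r m : nat) (M : 'M[int]_(r, m)).
Hypothesis TU : totally_unimodular M.

Definition tu_row n (h : 'I_n -> 'I_m) (v : 'I_n -> R) : Prop :=
  [\/ exists c, forall j, v j = (j == c)%:R, forall j, v j = 0 |
      exists i, forall j, v j = (M i (h j))%:~R].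

Lemma eq_tu_row n h (v w : 'I_n -> R) : v =1 w -> tu_row h v -> tu_row h w.
Proof.
move=> vw [[c vc]|v0|[i vi]]; [apply: Or31; exists c|apply: Or32|apply: Or33; exists i];
  by move=> j; rewrite -vw.
Qed.

Lemma tu_row_lift n h (v : 'I_n.+1 -> R) c :
  tu_row h v -> tu_row (h \o lift c) (v \o lift c).
Proof.
move=> [[c' vc']|v0|[i vi]]; last 2 first.
- by apply: Or32 => j /=; rewrite v0.
- by apply: Or33; exists i => j /=; rewrite vi.
have [c'c|c'c] := eqVneq c' c.
  by apply: Or32 => j /=; rewrite vc' c'c eq_sym (negbTE (neq_lift _ _)).
rewrite eq_sym in c'c; have [k ck _] := unlift_some c'c.
by apply: Or31; exists k => j /=; rewrite vc' ck (inj_eq (@lift_inj _ c)).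
Qed.

Lemma det_tu_rows n (N : 'M[R]_n) h :
  (forall i, tu_row h (N i)) -> \det N \in [:: -1; 0; 1].
Proof.
elim: n N h => [|n IHn] N h Nrows; first by rewrite det_mx00 !inE eqxx !orbT.
case: (classic (forall i, exists i', forall j, N i j = (M i' (h j))%:~R)).
  move=> /fin_all_exists [g Ng].
  have -> : N = map_mx intr (mxsub g h M) by apply/matrixP => i j; rewrite !mxE Ng.
  by rewrite det_map_mx; apply/pm1_intr/TU.
move=> /not_all_ex_not [i Ni]; rewrite (expand_det_row N i).
case: (Nrows i) => [[c Nc]|N0|//].
  rewrite (bigD1 c) //= big1 => [|j /negbTE jc]; last by rewrite Nc jc mul0r.
  rewrite Nc eqxx mul1r addr0; apply/pm1_signr/(IHn _ (h \o lift c)) => i'.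
  by apply: (eq_tu_row _ (tu_row_lift c (Nrows (lift i i')))) => j; rewrite !mxE.
by rewrite big1 ?inE ?eqxx ?orbT // => j _; rewrite N0 mul0r.
Qed.

Lemma invmx_tu_rows n (N : 'M[R]_n) h : N \in unitmx ->
  (forall i, tu_row h (N i)) -> forall i j, invmx N i j \in [:: -1; 0; 1].
Proof.
case: n N h => [|n] N h Nunit Nrows i j; first by case: i.
rewrite /invmx Nunit !mxE.
have cof : cofactor N j i \in [:: -1; 0; 1].
  apply/pm1_signr/(det_tu_rows (h := h \o lift i)) => k.
  by apply: (eq_tu_row _ (tu_row_lift i (Nrows (lift j k)))) => l; rewrite !mxE.
have det0 : \det N != 0 by rewrite -unitfE -unitmxE.
have detP := det_tu_rows Nrows; rewrite !inE in detP.
case/or3P: detP => /eqP detE; rewrite detE ?eqxx // in det0 *.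
  by rewrite invrN1; apply: (pm1_signr 1 cof).
by rewrite invr1 mul1r.
Qed.

(** * Conformal circuits *)

Lemma flow_sub (y w : 'I_m -> R) : in_flow_space M y -> in_flow_space M w ->
  in_flow_space M (fun e => y e - w e).
Proof. by move=> Fy Fw i; under eq_bigr do rewrite mulrBr; rewrite sumrB Fy Fw subr0. Qed.

Lemma flow_scale t (y : 'I_m -> R) : in_flow_space M y -> in_flow_space M (fun e => t * y e).
Proof. by move=> Fy i; under eq_bigr do rewrite mulrCA; rewrite -mulr_sumr Fy mulr0. Qed.

Definition support_minimal (j0 : 'I_m) (y : 'I_m -> R) : Prop :=
  forall z : 'I_m -> R, in_flow_space M z -> (forall e, y e = 0 -> z e = 0) -> z j0 = 0 ->
    forall e, z e = 0.

Lemma conforms_flow_shrink (a y w : 'I_m -> R) j0 e1 :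
  in_flow_space M y -> conforms y a -> y j0 != 0 ->
  in_flow_space M w -> (forall e, y e = 0 -> w e = 0) -> w j0 = 0 -> 0 < w e1 * y e1 ->
  exists y' : 'I_m -> R, [/\ in_flow_space M y', conforms y' a, y' j0 != 0 &
    (#|[set e | y' e != 0%R]| < #|[set e | y e != 0%R]|)%N].
Proof.
move=> Fy ya yj0 Fw wy wj0 we1.
(* Ratio test: t is the largest step for which y - t w still conforms to y; it kills y at es. *)
pose P e := 0 < w e * y e.
have [es Pes es_min] := @arg_minP _ _ _ e1 P (fun e => y e / w e) we1.
set t := y es / w es in es_min *.
have wes : w es != 0 by apply: contraTneq Pes; rewrite /P => ->; rewrite mul0r ltxx.
have t_gt0 : 0 < t.
  have -> : t = (w es * y es) / (w es * w es) by rewrite /t; field.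
  by rewrite divr_gt0 // mulr_self_gt0.
pose y' e := y e - t * w e.
have y'_supp e : y e = 0 -> y' e = 0 by move=> ye; rewrite /y' ye wy // mulr0 subr0.
have y'y : conforms y' y.
  move=> e y'e; have ye : y e != 0 by apply: contra_neq y'e; apply: y'_supp.
  rewrite lt0r mulf_eq0 negb_or y'e ye /=.
  have [Pe|nPe] := boolP (P e).
    have we : w e != 0 by apply: contraTneq Pe; rewrite /P => ->; rewrite mul0r ltxx.
    have -> : y' e * y e = (w e * y e) * (y e / w e - t) by rewrite /y'; field.
    by apply: mulr_ge0; [exact: ltW | rewrite subr_ge0; exact: es_min].
  have -> : y' e * y e = y e * y e - t * (w e * y e) by rewrite /y'; ring.
  rewrite subr_ge0; apply: (@le_trans _ _ 0); first by rewrite pmulr_rle0 // leNgt.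
  by rewrite -expr2 sqr_ge0.
exists y'; split.
- exact: flow_sub Fy (flow_scale t Fw).
- exact: conforms_trans y'y ya.
- by rewrite /y' wj0 mulr0 subr0.
- apply/proper_card/properP; split.
    by apply/subsetP => e; rewrite !inE; apply: contra_neq; apply: y'_supp.
  exists es; first by rewrite inE; apply: contraTneq Pes; rewrite /P => ->; rewrite mulr0 ltxx.
  by rewrite inE /y' /t divfK // subrr eqxx.
Qed.

Lemma exists_support_minimal (a y : 'I_m -> R) j0 :
  in_flow_space M y -> conforms y a -> y j0 != 0 ->
  exists2 y', [/\ in_flow_space M y', conforms y' a & y' j0 != 0] & support_minimal j0 y'.
Proof.
have [n] := ubnP #|[set e | y e != 0]|; elim: n y => // n IH y ysize Fy ya yj0.
case: (classic (support_minimal j0 y)) => [ymin|ynot]; first by exists y.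
have [z [Fz zy zj0 [e1 ze1]]] : exists z : 'I_m -> R, [/\ in_flow_space M z,
    forall e, y e = 0 -> z e = 0, z j0 = 0 & exists e, z e != 0].
  apply: NNPP => noz; apply: ynot => z Fz zy zj0 e; apply: NNPP => ze; apply: noz.
  by exists z; split => //; exists e; apply/eqP.
have ye1 : y e1 != 0 by apply: contra_neq ze1; apply: zy.
pose s : R := if 0 < z e1 * y e1 then 1 else -1.
have s_pos : 0 < s * z e1 * y e1.
  rewrite /s -mulrA; case: ifPn; rewrite ?mul1r // -leNgt mulN1r oppr_gt0 => zy_le0.
  by rewrite lt_neqAle zy_le0 mulf_neq0.
have sz_supp e : y e = 0 -> s * z e = 0 by move=> /zy ->; rewrite mulr0.
have sz_j0 : s * z j0 = 0 by rewrite zj0 mulr0.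
have [y' [Fy' y'a y'j0 y'size]] :=
  conforms_flow_shrink Fy ya yj0 (flow_scale s Fz) sz_supp sz_j0 s_pos.
by apply: (IH y' _ Fy' y'a y'j0); exact: leq_trans y'size (ltnSE ysize).
Qed.

(* Rows of the identity select the equations z e = 0 off the support of y and z j0 = 1, the
   rows of M add M z = 0; for a support-minimal flow y, z = y / y j0 is the unique solution. *)
Definition support_system (j0 : 'I_m) (y : 'I_m -> R) : 'M[R]_(m + r, m) :=
  col_mx (\matrix_(e, j) if (y e == 0) || (e == j0) then (e == j)%:R else 0)
         (map_mx intr M).

Lemma support_system_lshift j0 y e j : support_system j0 y (lshift r e) j =
  if (y e == 0) || (e == j0) then (e == j)%:R else 0.
Proof. by rewrite col_mxEu mxE. Qed.

Lemma support_system_rshift j0 y i j : support_system j0 y (rshift m i) j = (M i j)%:~R.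
Proof. by rewrite col_mxEd mxE. Qed.

Lemma support_system_tu_rows j0 y k : tu_row id (support_system j0 y k).
Proof.
rewrite -(splitK k); case: (split k) => [e|i] /=.
  have [sel|nsel] := boolP ((y e == 0) || (e == j0)).
    by apply: Or31; exists e => j; rewrite support_system_lshift sel eq_sym.
  by apply: Or32 => j; rewrite support_system_lshift (negbTE nsel).
by apply: Or33; exists i => j; rewrite support_system_rshift.
Qed.

Lemma support_system_row_full j0 y :
  support_minimal j0 y -> row_full (support_system j0 y).
Proof.
move=> ymin; rewrite /row_full -mxrank_tr; change (row_free (support_system j0 y)^T).
apply: inj_row_free => v vQ.
have vQk k : \sum_j v 0 j * support_system j0 y k j = 0.
  move/matrixP: vQ => /(_ 0 k); rewrite !mxE => vQ0; rewrite -[RHS]vQ0.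
  by apply: eq_bigr => j _; rewrite [_^T _ _]mxE.
have v_sel e : (y e == 0) || (e == j0) -> v 0 e = 0.
  move=> sel; rewrite -(vQk (lshift r e)) (bigD1 e) //= big1 => [|j je].
    by rewrite support_system_lshift sel eqxx mulr1 addr0.
  by rewrite support_system_lshift sel eq_sym (negbTE je) mulr0.
apply/rowP => j; rewrite mxE; apply: (ymin (fun j => v 0 j)).
- move=> i; rewrite -[RHS](vQk (rshift m i)).
  by apply: eq_bigr => e _; rewrite support_system_rshift mulrC.
- by move=> e ye; apply: v_sel; rewrite ye eqxx.
- by apply: v_sel; rewrite eqxx orbT.
Qed.

Lemma support_system_ratio j0 y : in_flow_space M y -> y j0 != 0 ->
  support_system j0 y *m \col_j (y j / y j0) = \col_k (k == lshift r j0)%:R.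
Proof.
move=> Fy yj0; apply/colP => k; rewrite !mxE; under eq_bigr do rewrite mxE.
rewrite -(splitK k); case: (split k) => [e|i] /=.
  rewrite eq_lshift; under eq_bigr do rewrite support_system_lshift.
  have [sel|nsel] := boolP ((y e == 0) || (e == j0)); last first.
    rewrite big1 => [|j _]; last by rewrite mul0r.
    by move: nsel; rewrite negb_or => /andP [_ /negbTE ->].
  rewrite (bigD1 e) //= big1 => [|j je]; last by rewrite eq_sym (negbTE je) mul0r.
  rewrite eqxx mul1r addr0; case/orP: sel => [/eqP ye|/eqP ->]; last by rewrite eqxx divff.
  have ej0 : e != j0 by apply: contra_neq yj0 => <-.
  by rewrite ye mul0r (negbTE ej0).
rewrite eq_rlshift; under eq_bigr do rewrite support_system_rshift mulrA.
by rewrite -mulr_suml Fy mul0r.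
Qed.

Lemma support_minimal_ratio_pm1 j0 y : in_flow_space M y -> y j0 != 0 ->
  support_minimal j0 y -> pm1_valued (fun j => y j / y j0).
Proof.
move=> Fy yj0 ymin j; have Qfull := support_system_row_full ymin.
set Q := support_system j0 y in Qfull *; pose f := fullrankfun Qfull.
have Q'unit : rowsub f Q \in unitmx := fullrowsub_unit Qfull.
have Q'rows i : tu_row id (rowsub f Q i).
  by apply: (eq_tu_row _ (support_system_tu_rows j0 y (f i))) => l; rewrite [RHS]mxE.
have y_sol : \col_j (y j / y j0) =
    invmx (rowsub f Q) *m rowsub f (\col_k (k == lshift r j0)%:R).
  by rewrite -(support_system_ratio Fy yj0) -mul_rowsub_mx mulKmx.
have := congr1 (fun A : 'cV[R]_m => A j 0) y_sol; rewrite !mxE => ->.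
have [i0 fi0|nf] := pickP (fun i => f i == lshift r j0).
  rewrite (bigD1 i0) //= big1 => [|i ii0]; rewrite !mxE.
    by rewrite fi0 mulr1 addr0; apply: invmx_tu_rows.
  by rewrite -(eqP fi0) (inj_eq (@fullrankfun_inj _ _ _ _ Qfull)) (negbTE ii0) mulr0.
by rewrite big1 ?inE ?eqxx ?orbT // => i _; rewrite !mxE nf mulr0.
Qed.

Lemma flow_intv (lam : 'I_m -> int) : in_lattice M lam -> in_flow_space M (intv R lam).
Proof.
move=> Llam i; have := congr1 (fun z : int => z%:~R : R) (Llam i).
rewrite /= rmorph_sum rmorph0 => sum0; rewrite -[RHS]sum0.
by apply: eq_bigr => e _; rewrite rmorphM.
Qed.

Lemma conformal_circuit (lam : 'I_m -> int) j0 : in_lattice M lam -> lam j0 != 0 ->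
  exists g : 'I_m -> int, [/\ in_lattice M g, pm1_valued g, g j0 != 0 & conforms g lam].
Proof.
move=> Llam lamj0.
have lam_self : conforms (intv R lam) (intv R lam) by move=> e; apply: mulr_self_gt0.
have lamj0' : intv R lam j0 != 0 by rewrite intr_eq0.
have [y [Fy ylam yj0] ymin] := exists_support_minimal (flow_intv Llam) lam_self lamj0'.
pose c := `|y j0|; have c_gt0 : 0 < c by rewrite normr_gt0.
have /fin_all_exists [g gE] : forall e, exists z : int, z \in [:: -1; 0; 1] /\ y e / c = z%:~R.
  move=> e; apply: pm1_intrP; rewrite /c normrEsign invfM invr_sign mulrCA.
  exact/pm1_signr/support_minimal_ratio_pm1.
exists g; split.
- move=> i; apply/eqP; rewrite -(intr_eq0 R) rmorph_sum /=.
  under eq_bigr => e _ do rewrite rmorphM /= -(gE e).2 mulrA.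
  by rewrite -mulr_suml Fy mul0r.
- by move=> e; case: (gE e).
- by rewrite -(intr_eq0 R) -(gE j0).2 mulf_neq0 // invr_eq0 normr_eq0.
- move=> e ge; have ye : y e != 0.
    by apply: contra_neq ge => ye; apply/eqP; rewrite -(intr_eq0 R) -(gE e).2 ye mul0r.
  by rewrite -(ltr0z R) rmorphM /= -(gE e).2 mulrAC divr_gt0 // ylam.
Qed.


(** * Tight lattice flows on the Voronoi cell *)

Lemma in_lattice_add (a b : 'I_m -> int) :
  in_lattice M a -> in_lattice M b -> in_lattice M (fun e => a e + b e).
Proof. by move=> La Lb i; under eq_bigr do rewrite mulrDr; rewrite big_split /= La Lb addr0. Qed.

Lemma in_lattice_sub (a b : 'I_m -> int) :
  in_lattice M a -> in_lattice M b -> in_lattice M (fun e => a e - b e).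
Proof. by move=> La Lb i; under eq_bigr do rewrite mulrBr; rewrite sumrB La Lb subr0. Qed.

Lemma in_lattice_sum (I : finType) (P : pred I) (g : I -> 'I_m -> int) :
  (forall i, P i -> in_lattice M (g i)) -> in_lattice M (fun e => \sum_(i | P i) g i e).
Proof.
move=> Lg k; under eq_bigr do rewrite mulr_sumr.
by rewrite exchange_big big1 // => i Pi; apply: Lg.
Qed.

Definition tight (x : 'I_m -> R) (g : 'I_m -> int) : Prop :=
  2 * dotR x (intv R g) = (norm1 g)%:~R.

Lemma dotR_intvD x (a b : 'I_m -> int) :
  dotR x (intv R (fun e => a e + b e)) = dotR x (intv R a) + dotR x (intv R b).
Proof. by rewrite /dotR -big_split; apply: eq_bigr => e _; rewrite /intv rmorphD mulrDr. Qed.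

Lemma dotR_intvB x (a b : 'I_m -> int) :
  dotR x (intv R (fun e => a e - b e)) = dotR x (intv R a) - dotR x (intv R b).
Proof. by rewrite /dotR -sumrB; apply: eq_bigr => e _; rewrite /intv rmorphB mulrBr. Qed.

Lemma dotR_intv_sum (I : finType) (P : pred I) x (g : I -> 'I_m -> int) :
  dotR x (intv R (fun e => \sum_(i | P i) g i e)) = \sum_(i | P i) dotR x (intv R (g i)).
Proof.
rewrite /dotR exchange_big; apply: eq_bigr => e _.
by rewrite /intv rmorph_sum mulr_sumr.
Qed.

Lemma dotR_intv_pm1 (g : 'I_m -> int) :
  pm1_valued g -> dotR (intv R g) (intv R g) = (norm1 g)%:~R.
Proof.
move=> gpm; rewrite /dotR /norm1 rmorph_sum; apply: eq_bigr => e _.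
by rewrite /intv -rmorphM /=; have := gpm e; rewrite !inE => /or3P [] /eqP ->.
Qed.

Lemma normR_intv_sqr (g : 'I_m -> int) :
  pm1_valued g -> normR (intv R g) ^+ 2 = (norm1 g)%:~R.
Proof.
move=> gpm; rewrite /normR sqr_sqrtr dotR_intv_pm1 // ler0z.
by apply: sumr_ge0.
Qed.

Lemma Fgamma_tight (g : 'I_m -> int) x :
  in_flow_space M x -> pm1_valued g -> Fgamma M g x <-> tight x g.
Proof. by move=> Fx gpm; rewrite /Fgamma /tight normR_intv_sqr //; split => [[]|]. Qed.

Lemma voronoi_dot_le_pm1 x (g : 'I_m -> int) :
  voronoi0 M x -> in_lattice M g -> pm1_valued g -> 2 * dotR x (intv R g) <= (norm1 g)%:~R.
Proof.
move=> [_ xnear] Lg gpm; have := xnear g Lg.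
rewrite /normR ler_sqrt; last by apply: sumr_ge0 => e _; rewrite -expr2 sqr_ge0.
have -> : dotR (fun e => x e - intv R g e) (fun e => x e - intv R g e) =
    dotR x x - 2 * dotR x (intv R g) + dotR (intv R g) (intv R g).
  by rewrite /dotR mulr_sumr -sumrB -big_split /=; apply: eq_bigr => e _; ring.
by rewrite dotR_intv_pm1 // -addrA lerDl addrC subr_ge0.
Qed.

Lemma voronoi_dot_le_norm1 x (lam : 'I_m -> int) : voronoi0 M x -> in_lattice M lam ->
  2 * dotR x (intv R lam) <= (norm1 lam)%:~R.
Proof.
move=> Vx; have [n] := ubnP (absz (norm1 lam)); elim: n lam => // n IH lam lam_size Llam.
have [j0 lamj0|lam0] := pickP (fun e => lam e != 0); last first.
  have lamE e : lam e = 0 by apply/eqP; rewrite -[_ == _]negbK lam0.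
  by rewrite /dotR /norm1 !big1 ?mulr0 ?rmorph0 // => e _; rewrite /intv lamE ?rmorph0 ?mulr0.
have [g [Lg gpm gj0 glam]] := conformal_circuit Llam lamj0.
have lamE := norm1_conforms_pm1 gpm glam.
have g_ge1 : 1 <= norm1 g.
  rewrite /norm1 (bigD1 j0) //= -[1]addr0.
  by apply: lerD; [move: gj0; lia | apply: sumr_ge0].
have rest_size : (absz (norm1 (fun e => (lam e - g e)%R)) < n)%N.
  have : 0 <= norm1 (fun e => lam e - g e) by apply: sumr_ge0.
  by move: lam_size; rewrite lamE; lia.
have := IH _ rest_size (in_lattice_sub Llam Lg).
have := voronoi_dot_le_pm1 Vx Lg gpm.
by rewrite dotR_intvB lamE rmorphD /=; lra.
Qed.

Lemma tight_compatible x (g1 g2 : 'I_m -> int) : voronoi0 M x ->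
  in_lattice M g1 -> pm1_valued g1 -> tight x g1 ->
  in_lattice M g2 -> pm1_valued g2 -> tight x g2 -> sign_compatible g1 g2.
Proof.
move=> Vx Lg1 g1pm tg1 Lg2 g2pm tg2 e; rewrite leNgt; apply/negP => opposite.
have gap : norm1 (fun f => g1 f + g2 f) + 2 <= norm1 g1 + norm1 g2.
  rewrite /norm1 -big_split /= (bigD1 e) //= [X in _ <= X](bigD1 e) //= [X in X <= _]addrAC.
  apply: lerD; first exact: normzD_opposite_pm1 (g1pm e) (g2pm e) opposite.
  by apply: ler_sum => f _; apply: ler_normD.
have := voronoi_dot_le_norm1 Vx (in_lattice_add Lg1 Lg2).
by rewrite dotR_intvD mulrDr tg1 tg2 -rmorphD ler_int; move: gap; lia.
Qed.

Lemma tight_sum (I : finType) (P : pred I) x (g : I -> 'I_m -> int) :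
  (forall i, P i -> tight x (g i)) ->
  (forall i j, P i -> P j -> sign_compatible (g i) (g j)) ->
  tight x (fun e => \sum_(i | P i) g i e).
Proof.
move=> tg cg; rewrite /tight dotR_intv_sum mulr_sumr (eq_bigr _ tg) -rmorph_sum.
congr (_%:~R); rewrite /norm1 exchange_big; apply: eq_bigr => e _.
by rewrite normz_sum_compatible // => i j Pi Pj; apply: cg.
Qed.

Lemma tight_summand x (a b c : 'I_m -> int) : voronoi0 M x ->
  in_lattice M a -> in_lattice M b -> (forall e, c e = a e + b e) ->
  norm1 c = norm1 a + norm1 b -> tight x c -> tight x a.
Proof.
move=> Vx La Lb cE normE; rewrite /tight normE rmorphD.
have -> : dotR x (intv R c) = dotR x (intv R a) + dotR x (intv R b).
  by rewrite -dotR_intvD; apply: eq_bigr => e _; rewrite /intv cE.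
have := voronoi_dot_le_norm1 Vx La; have := voronoi_dot_le_norm1 Vx Lb; lra.
Qed.

End RegularMatroid.

Section VoronoiFace.
Variables (R : realType) (r m : nat) (M : 'M[int]_(r, m)).
Hypothesis TU : totally_unimodular M.
Variables (F : ('I_m -> R) -> Prop) (x0 : 'I_m -> R).
Hypotheses (F_voronoi : forall x, F x -> voronoi0 M x) (F_x0 : F x0).

Definition phi_witness (e : 'I_m) : 'I_m -> int :=
  epsilon (inhabits (fun _ : 'I_m => 0 : int)) (fun g => inU M F g /\ g e != 0).

Lemma phi_witnessP e : (phi M F).1 e -> inU M F (phi_witness e) /\ phi_witness e e != 0.
Proof. exact: epsilon_spec. Qed.

Lemma inU_tight g x : inU M F g -> F x -> tight x g.
Proof.
move=> [[gpm _] Fg] Fx; have [Fx_flow _] := F_voronoi Fx.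
exact: (Fgamma_tight Fx_flow gpm).1 (Fg x Fx).
Qed.

Lemma inU_compatible g1 g2 : inU M F g1 -> inU M F g2 -> sign_compatible g1 g2.
Proof.
move=> U1 U2; have [[g1pm [Lg1 _]] _] := U1; have [[g2pm [Lg2 _]] _] := U2.
exact: (tight_compatible TU (F_voronoi F_x0) Lg1 g1pm (inU_tight U1 F_x0)
  Lg2 g2pm (inU_tight U2 F_x0)).
Qed.

Lemma inU_phi_le l : inU M F l -> sc_le (phi M F) (N_of l).
Proof.
move=> lU; split=> e /= le; first by exists l.
have [wU we] := phi_witnessP (ex_intro _ l (conj lU le)).
exact: sgz_eq_mul_ge0 le we (inU_compatible lU wU e).
Qed.

Lemma phi_le_inU l : is_circuit_flow R M l -> sc_le (phi M F) (N_of l) -> inU M F l.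
Proof.
move=> lcirc [supp_le sign_eq]; split=> // x Fx; have [lpm [Ll _]] := lcirc.
have Vx := F_voronoi Fx; apply/(Fgamma_tight (proj1 Vx) lpm).
pose P e := l e != 0.
have wP e : P e -> inU M F (phi_witness e) /\ phi_witness e e != 0.
  by move=> le; apply/phi_witnessP/supp_le.
pose mu f := \sum_(e | P e) phi_witness e f.
have Lmu : in_lattice M mu by apply: in_lattice_sum => e /wP [[[_ [Le _]] _] _].
have tmu : tight x mu.
  apply: tight_sum => [e /wP [eU _]|e e' /wP [eU _] /wP [e'U _]].
    exact: inU_tight eU Fx.
  exact: inU_compatible eU e'U.
have lmu : conforms l mu.
  move=> f lf; have [fU _] := wP f lf.
  have lw : 0 < l f * phi_witness f f := mul_gt0_sgz_eq lf (sign_eq f lf).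
  rewrite /mu mulr_sumr (bigD1 f) //= ltr_pwDl // sumr_ge0 // => e /andP [Pe _].
  exact: mul_ge0_sign_trans lw (inU_compatible (wP e Pe).1 fU f).
apply: (tight_summand TU Vx Ll (in_lattice_sub Lmu Ll) _ (norm1_conforms_pm1 lpm lmu) tmu).
by move=> e; rewrite addrC subrK.
Qed.

End VoronoiFace.

Theorem mainTheorem13 (R : realType) (r m : nat) (M : 'M[int]_(r, m)) :
  totally_unimodular M ->
  forall F : ('I_m -> R) -> Prop,
    is_face (voronoi0 M) F -> (exists x, F x) ->
  forall l : 'I_m -> int, is_circuit_flow R M l ->
    (inU M F l <-> sc_le (phi M F) (N_of l)).
Proof.
move=> TU F [a [b [_ Fface]]] [x0 Fx0] l lcirc.
have F_voronoi x : F x -> voronoi0 M x by move=> /Fface [].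
split; [exact: (inU_phi_le TU F_voronoi Fx0) | exact: (phi_le_inU TU F_voronoi Fx0 lcirc)].
Qed.
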